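(* Let $P$ be a finite poset, $R$ a commutative unital ring, and $D$ a derivation of $I^3(P,R)$. Then for all $x\in P$, $$D(e_x)=\sum_{v\in P,\ x<v}D(e_x)(x,x,v)\,e_{xxv}+\sum_{u\in P,\ u<x}D(e_x)(u,x,x)\,e_{uxx}.$$
   Context: For a finite poset $P$, $P^3_\le=\{(x,y,z)\in P^3: x\le y\le z\}$, and $I^3(P,R)$ is the $R$-module of functions $f:P^3_\le\to R$ with multiplication $(fg)(x_1,x_2,x_3)=\sum f(x_1,y_1,y_2)g(y_1,y_2,x_3)$ over all $x_1\le y_1\le x_2\le y_2\le x_3$. For $x\le y\le z$, $e_{xyz}$ is the function equal to $1$ at $(x,y,z)$ and $0$ elsewhere, and $e_x:=e_{xxx}$. A derivation is an $R$-linear map $D:I^3(P,R)\to I^3(P,R)$ with $D(fg)=D(f)g+fD(g)$. *)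

From HB Require Import structures.
From mathcomp Require Import all_boot all_order all_algebra.
Set Implicit Arguments. Unset Strict Implicit. Unset Printing Implicit Defensive.
Import Order.POrderTheory GRing.Theory.
Local Open Scope order_scope.

Definition chain3 (d : Order.disp_t) (P : finPOrderType d) :=
  {t : P * P * P | (t.1.1 <= t.1.2) && (t.1.2 <= t.2)}.

Notation I3 P R := {ffun chain3 P -> R}.

(* value of f at (x,y,z); 0 (irrelevant) when (x,y,z) is not in P^3_<= *)
Definition ev d (P : finPOrderType d) (R : comNzRingType) (f : I3 P R)
  (x y z : P) : R :=
  if @insub _ _ (chain3 P) (x, y, z) is Some t then f t else 0%R.

Definition e3 d (P : finPOrderType d) (R : comNzRingType) (x y z : P) : I3 P R :=
  [ffun t : chain3 P => if val t == (x, y, z) then 1%R else 0%R].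

Definition mul3 d (P : finPOrderType d) (R : comNzRingType) (f g : I3 P R)
  : I3 P R :=
  [ffun t : chain3 P =>
     let x1 : P := (val t).1.1 in let x2 : P := (val t).1.2 in
     let x3 : P := (val t).2 in
     (\sum_(y1 : P) \sum_(y2 : P |
        [&& x1 <= y1, y1 <= x2, x2 <= y2 & y2 <= x3]%O)
        ev f x1 y1 y2 * ev g y1 y2 x3)%R].

Definition sc3 d (P : finPOrderType d) (R : comNzRingType) (a : R) (f : I3 P R)
  : I3 P R := [ffun t => (a * f t)%R].

Definition derivation3 d (P : finPOrderType d) (R : comNzRingType)
  (D : I3 P R -> I3 P R) : Prop :=
  (forall (a : R) (f g : I3 P R), D (sc3 a f + g)%R = (sc3 a (D f) + D g)%R) /\
  (forall f g : I3 P R, D (mul3 f g) = (mul3 (D f) g + mul3 f (D g))%R).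

(** [e_x] is idempotent, so the Leibniz rule gives
    [D(e_x) = D(e_x) e_x + e_x D(e_x)].  Right multiplication by [e_x] keeps only
    the values [f(a,x,x)] (placed at [(a,x,x)]), left multiplication only the
    values [f(x,x,c)] (placed at [(x,x,c)]); hence [D(e_x)] is supported on such
    triples, and at [(x,x,x)] both terms survive, so [D(e_x)(x,x,x)] equals
    twice itself and vanishes. *)

From mathcomp Require Import all_boot all_order all_algebra.
Import Order.POrderTheory GRing.Theory.
Set Implicit Arguments. Unset Strict Implicit. Unset Printing Implicit Defensive.
Local Open Scope ring_scope.

Lemma sum_mulrn_eq (I : finType) (V : nmodType) (Q : pred I) (F : I -> V) (w : I) :
  \sum_(i | Q i) F i *+ (i == w) = F w *+ Q w.
Proof.
case Qw: (Q w).
  rewrite (bigD1 w) //= eqxx big1 ?addr0 // => i /andP[_ /negbTE->].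
  by rewrite mulr0n.
rewrite big1 // => i Qi; have /negbTE-> : i != w by apply: contraTneq Qi => ->; rewrite Qw.
by rewrite mulr0n.
Qed.

Lemma sum_pair_supp1 (I : finType) (V : nmodType) (w : I) (Q : I -> I -> bool)
    (F : I -> I -> V) :
  (forall i j, (i != w) || (j != w) -> F i j = 0) ->
  \sum_i \sum_(j | Q i j) F i j = F w w *+ Q w w.
Proof.
move=> Fsupp; rewrite (bigD1 w) //= [X in _ + X]big1 => [|i iw]; last first.
  by rewrite big1 // => j _; rewrite Fsupp ?iw.
rewrite addr0 -(sum_mulrn_eq (Q w) (F w)); apply: eq_bigr => j Qj.
by case: eqVneq => [->|jw]; rewrite ?mulr1n // Fsupp ?jw ?orbT.
Qed.

Section I3Evaluation.
Variables (d : Order.disp_t) (P : finPOrderType d) (R : comNzRingType).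
Implicit Types (f g : I3 P R) (a b c x y z : P).

Lemma ev_val f (t : chain3 P) : f t = ev f (val t).1.1 (val t).1.2 (val t).2.
Proof.
rewrite /ev; case: insubP => [u _ tu|]; last by move: (valP t); case: (val t) => [[? ?] ?] /= ->.
by congr (f _); apply: val_inj; rewrite tu; case: (val t) => [[]].
Qed.

Lemma eq_I3 f g :
  (forall a b c, (a <= b)%O -> (b <= c)%O -> ev f a b c = ev g a b c) -> f = g.
Proof.
move=> fg; apply/ffunP => t; rewrite ev_val [RHS]ev_val.
by case/andP: (valP t) => ab bc; apply: fg.
Qed.

Lemma ev_chainE f a b c (abc : (a <= b)%O && (b <= c)%O) :
  ev f a b c = f (exist _ (a, b, c) abc).
Proof. by rewrite [RHS]ev_val. Qed.

Lemma ev_add f g a b c : ev (f + g) a b c = ev f a b c + ev g a b c.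
Proof. by rewrite /ev; case: insub => [t|]; rewrite ?ffunE ?addr0. Qed.

Lemma ev_sum (I : Type) (r : seq I) (Q : pred I) (F : I -> I3 P R) a b c :
  ev (\sum_(i <- r | Q i) F i) a b c = \sum_(i <- r | Q i) ev (F i) a b c.
Proof.
apply: (big_morph (fun f => ev f a b c)) => [f g|]; first exact: ev_add.
by rewrite /ev; case: insub => [t|]; rewrite ?ffunE.
Qed.

Lemma ev_sc3 k f a b c : ev (sc3 k f) a b c = k * ev f a b c.
Proof. by rewrite /ev; case: insub => [t|]; rewrite ?ffunE ?mulr0. Qed.

Lemma ev_e3 x y z a b c : (a <= b)%O -> (b <= c)%O ->
  ev (e3 R x y z) a b c = ((a, b, c) == (x, y, z))%:R.
Proof.
move=> ab bc; have abc : (a <= b)%O && (b <= c)%O by rewrite ab bc.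
by rewrite (ev_chainE _ abc) ffunE /=; case: eqP.
Qed.

Lemma ev_mul3 f g a b c : (a <= b)%O -> (b <= c)%O ->
  ev (mul3 f g) a b c =
  \sum_(y1 : P) \sum_(y2 : P | [&& a <= y1, y1 <= b, b <= y2 & y2 <= c]%O)
    ev f a y1 y2 * ev g y1 y2 c.
Proof.
move=> ab bc; have abc : (a <= b)%O && (b <= c)%O by rewrite ab bc.
by rewrite (ev_chainE _ abc) ffunE.
Qed.

Lemma ev_e3_eq0 x y z a b c : (a, b, c) != (x, y, z) -> ev (e3 R x y z) a b c = 0.
Proof.
by move=> /negbTE abc; rewrite /ev; case: insubP => [t _ tv|]; rewrite ?ffunE ?tv ?abc.
Qed.

Lemma squeeze_chainE x a b c : (a <= b)%O -> (b <= c)%O ->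
  [&& a <= x, x <= b, b <= x & x <= c]%O = (b == x).
Proof.
move=> ab bc; case: (eqVneq b x) => [<-|bx]; first by rewrite ab bc lexx.
by apply/negP => /and4P[_ xb bx' _]; move: bx; rewrite eq_le bx' xb.
Qed.

Lemma ev_mul3_e3r f x a b c : (a <= b)%O -> (b <= c)%O ->
  ev (mul3 f (e3 R x x x)) a b c = ev f a x x *+ ((b == x) && (c == x)).
Proof.
move=> ab bc; rewrite ev_mul3 // (sum_pair_supp1 (w := x)) => [|y1 y2 yx]; last first.
  rewrite ev_e3_eq0 ?mulr0 // !xpair_eqE.
  by case/orP: yx => /negbTE->; rewrite ?andbF.
rewrite (squeeze_chainE _ ab bc); case: (eqVneq b x) => [<-|_] //.
by rewrite ev_e3 ?lexx // !xpair_eqE !eqxx mulr_natr.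
Qed.

Lemma ev_mul3_e3l f x a b c : (a <= b)%O -> (b <= c)%O ->
  ev (mul3 (e3 R x x x) f) a b c = ev f x x c *+ ((a == x) && (b == x)).
Proof.
move=> ab bc; rewrite ev_mul3 // (sum_pair_supp1 (w := x)) => [|y1 y2 yx]; last first.
  rewrite ev_e3_eq0 ?mul0r // !xpair_eqE.
  by case/orP: yx => /negbTE->; rewrite ?andbF.
rewrite (squeeze_chainE _ ab bc); case: (eqVneq b x) => [<-|_]; last by rewrite andbF.
by rewrite ev_e3 ?lexx // !xpair_eqE !eqxx !andbT mulr_natl.
Qed.

Lemma mul3_e3_idem x : mul3 (e3 R x x x) (e3 R x x x) = e3 R x x x.
Proof.
apply: eq_I3 => a b c ab bc; rewrite ev_mul3_e3r // [RHS]ev_e3 // !xpair_eqE -andbA.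
have [/andP[/eqP bx /eqP cx]|_] := boolP ((b == x) && (c == x)).
  by subst; rewrite ev_e3 ?lexx // !xpair_eqE !eqxx !andbT.
by rewrite andbF.
Qed.

Lemma ev_sum_e3_xxv (Q : pred P) (h : P -> R) x a b c : (a <= b)%O -> (b <= c)%O ->
  ev (\sum_(v | Q v) sc3 (h v) (e3 R x x v)) a b c = h c *+ ((a == x) && (b == x) && Q c).
Proof.
move=> ab bc; rewrite ev_sum.
under eq_bigr do rewrite ev_sc3 ev_e3 // !xpair_eqE mulr_natr [c == _]eq_sym.
case: ((a == x) && (b == x)); first exact: sum_mulrn_eq.
by rewrite big1 // => v _; rewrite mulr0n.
Qed.

Lemma ev_sum_e3_uxx (Q : pred P) (h : P -> R) x a b c : (a <= b)%O -> (b <= c)%O ->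
  ev (\sum_(u | Q u) sc3 (h u) (e3 R u x x)) a b c = h a *+ ((b == x) && (c == x) && Q a).
Proof.
move=> ab bc; rewrite ev_sum.
under eq_bigr do rewrite ev_sc3 ev_e3 // !xpair_eqE mulr_natr -andbA andbC [a == _]eq_sym.
case: ((b == x) && (c == x)); first exact: sum_mulrn_eq.
by rewrite big1 // => u _; rewrite mulr0n.
Qed.

End I3Evaluation.

Lemma derivation3_idem d (P : finPOrderType d) (R : comNzRingType)
    (D : I3 P R -> I3 P R) (e : I3 P R) :
  derivation3 D -> mul3 e e = e -> D e = mul3 (D e) e + mul3 e (D e).
Proof. by case=> _ DM ee; rewrite -{1}ee DM. Qed.

Section DerivationAtIdempotent.
Variables (d : Order.disp_t) (P : finPOrderType d) (R : comNzRingType).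
Variable D : I3 P R -> I3 P R.
Hypothesis HD : derivation3 D.
Variable x : P.
Local Notation ex := (e3 R x x x).

Lemma ev_derivation3_e3 a b c : (a <= b)%O -> (b <= c)%O ->
  ev (D ex) a b c =
  ev (D ex) x x c *+ ((a == x) && (b == x)) + ev (D ex) a x x *+ ((b == x) && (c == x)).
Proof.
move=> ab bc; rewrite {1}(derivation3_idem HD (mul3_e3_idem R x)).
by rewrite ev_add ev_mul3_e3r // ev_mul3_e3l // addrC.
Qed.

Lemma ev_derivation3_e3_diag : ev (D ex) x x x = 0.
Proof.
have := ev_derivation3_e3 (lexx x) (lexx x); rewrite eqxx mulr1n.
by rewrite -{1}[ev _ x x x]addr0 => /addrI <-.
Qed.

Lemma ev_derivation3_e3_supp a b c : (a <= b)%O -> (b <= c)%O ->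
  ev (D ex) a b c =
  ev (D ex) x x c *+ ((a == x) && (b == x) && (x < c)%O)
  + ev (D ex) a x x *+ ((b == x) && (c == x) && (a < x)%O).
Proof.
move=> ab bc; rewrite ev_derivation3_e3 //.
case: (eqVneq b x) => [bx|_]; last by rewrite !andbF.
subst b; rewrite !andbT !lt_def ab bc !andbT.
case: (eqVneq a x) => [->|ax]; case: (eqVneq c x) => [->|cx];
  by rewrite ?ev_derivation3_e3_diag ?eqxx ?(eq_sym x) ?ax ?cx /= ?addr0 ?add0r ?mulr0n.
Qed.

End DerivationAtIdempotent.

Theorem lemma4p1 (d : Order.disp_t) (P : finPOrderType d) (R : comNzRingType)
  (D : I3 P R -> I3 P R) (HD : derivation3 D) (x : P) :
  D (e3 R x x x) =
    (\sum_(v : P | (x < v)%O) sc3 (ev (D (e3 R x x x)) x x v) (e3 R x x v)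
     + \sum_(u : P | (u < x)%O) sc3 (ev (D (e3 R x x x)) u x x) (e3 R u x x))%R.
Proof.
apply: eq_I3 => a b c ab bc.
by rewrite [LHS](ev_derivation3_e3_supp HD) // ev_add ev_sum_e3_xxv // ev_sum_e3_uxx.
Qed.
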